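(* Let $\Delta$ be a pure $(d-1)$-dimensional simplicial complex on $[n]$, and let $\Gamma$ be the simplicial complex (collection of subsets of $[n]$ closed under taking subsets) with $I(\Delta)=I_\Gamma$. Then $\bar\Delta=\mathrm{skel}_\Gamma(d-1)$.
   Context: $S=K[x_1,\ldots,x_n]$, $x_F=\prod_{i\in F}x_i$. $I(\Delta)$ is the facet ideal, generated by $x_F$ for the facets (maximal faces) $F$ of $\Delta$; $I_\Gamma$ is the Stanley–Reisner ideal, generated by $x_F$ for $F\subseteq[n]$, $F\notin\Gamma$. $\Delta$ is pure if all facets have the same cardinality. $\bar\Delta$ is the simplicial complex whose facets are the $d$-element subsets $F\subseteq[n]$ with $F\notin\Delta$. $\mathrm{skel}_\Gamma(i)$ is the complex whose facets are the $i$-dimensional faces of $\Gamma$ (a face $F$ has dimension $|F|-1$). *)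

From HB Require Import structures.
From mathcomp Require Import all_boot all_order all_algebra.
From mathcomp Require Import mpoly.
Set Implicit Arguments. Unset Strict Implicit. Unset Printing Implicit Defensive.
Import GRing.Theory.
Local Open Scope ring_scope.

Definition is_complex (n : nat) (D : {set {set 'I_n}}) : Prop :=
  forall F G : {set 'I_n}, F \in D -> G \subset F -> G \in D.

Definition facets (n : nat) (D : {set {set 'I_n}}) : {set {set 'I_n}} :=
  [set F in D | [forall G in D, (F \subset G) ==> (G == F)]].

(* Pure (d-1)-dimensional: nonempty, and all facets have exactly d elements. *)
Definition pure_dim (n : nat) (D : {set {set 'I_n}}) (d : nat) : Prop :=
  D != set0 /\ forall F, F \in facets D -> #|F| = d.

Definition gen_complex (n : nat) (A : {set {set 'I_n}}) : {set {set 'I_n}} :=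
  [set G : {set 'I_n} | [exists F in A, G \subset F]].

Definition xmon (K : fieldType) (n : nat) (F : {set 'I_n}) : {mpoly K[n]} :=
  \prod_(i in F) 'X_i.

Definition in_mideal (K : fieldType) (n : nat) (A : {set {set 'I_n}})
    (p : {mpoly K[n]}) : Prop :=
  exists c : {set 'I_n} -> {mpoly K[n]}, p = \sum_(F in A) c F * xmon K F.

Definition facet_ideal (K : fieldType) (n : nat) (D : {set {set 'I_n}})
    : {mpoly K[n]} -> Prop := @in_mideal K n (facets D).

Definition SR_ideal (K : fieldType) (n : nat) (G : {set {set 'I_n}})
    : {mpoly K[n]} -> Prop := @in_mideal K n (~: G).

Definition bar_complex (n : nat) (D : {set {set 'I_n}}) (d : nat) : {set {set 'I_n}} :=
  gen_complex [set F : {set 'I_n} | (#|F| == d) && (F \notin D)].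

(* skel_Gamma(i): complex whose facets are the i-dimensional faces of Gamma
   (dim F = |F| - 1, an integer). *)
Definition skel (n : nat) (G : {set {set 'I_n}}) (i : int) : {set {set 'I_n}} :=
  gen_complex [set F in G | (#|F|%:Z - 1 == i)].

From HB Require Import structures.
From mathcomp Require Import all_boot all_order all_algebra.
From mathcomp Require Import mpoly.
Set Implicit Arguments. Unset Strict Implicit. Unset Printing Implicit Defensive.
Import GRing.Theory.
Local Open Scope ring_scope.

(* A squarefree monomial x_F lies in a monomial ideal iff some generator x_G
   divides it, i.e. G \subset F.  Hence I(Delta) = I_Gamma says that the sets
   containing a facet of Delta are exactly the non-faces of Gamma.  For a
   d-set F, containing a facet of the pure complex Delta means being that
   facet, so F \in Delta <-> F \notin Gamma, which is the claim. *)

Lemma facets_sub (n : nat) (D : {set {set 'I_n}}) : facets D \subset D.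
Proof. by apply/subsetP => F; rewrite inE => /andP[]. Qed.

Lemma facets_sup (n : nat) (D : {set {set 'I_n}}) (F : {set 'I_n}) :
  F \in D -> exists2 H, H \in facets D & F \subset H.
Proof.
move=> FD; have [H /maxsetP[HD maxH] sFH] := maxset_exists (P := fun H => H \in D) FD.
exists H => //; rewrite inE HD; apply/forall_inP => G GD; apply/implyP => sHG.
by rewrite (maxH G GD sHG).
Qed.

Section MonomialIdeal.

Variables (K : fieldType) (n : nat).

Definition indicator (F : {set 'I_n}) : 'I_n -> K := fun i => (i \in F)%:R.

Lemma meval_xmon (F G : {set 'I_n}) :
  meval (indicator F) (xmon K G) = (G \subset F)%:R.
Proof.
rewrite /xmon rmorph_prod /=; under eq_bigr do rewrite mevalXU.
case: (boolP (G \subset F)) => [sGF | /subsetPn[i iG iF]].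
  by apply: big1 => i iG; rewrite /indicator (subsetP sGF).
by rewrite (bigD1 i) //= /indicator (negbTE iF) mul0r.
Qed.

Lemma xmon_subset (F G : {set 'I_n}) :
  G \subset F -> xmon K F = xmon K (F :\: G) * xmon K G.
Proof. by move=> sGF; rewrite /xmon (big_setID G) /= (setIidPr sGF) mulrC. Qed.

Lemma in_mideal_xmonP (A : {set {set 'I_n}}) (F : {set 'I_n}) :
  in_mideal A (xmon K F) <-> exists2 G, G \in A & G \subset F.
Proof.
split=> [[c xFE] | [G GA sGF]].
- apply/exists_inP; apply: contraT => /exists_inPn noG.
  (* At the indicator of F, x_F evaluates to 1 and every generator to 0. *)
  have := congr1 (meval (indicator F)) xFE.
  rewrite meval_xmon subxx raddf_sum /= big1 => [/eqP | G GA]; first by rewrite oner_eq0.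
  by rewrite mevalM meval_xmon (negbTE (noG G GA)) mulr0.
- exists (fun H => if H == G then xmon K (F :\: G) else 0).
  rewrite (bigD1 G) //= eqxx big1 ?addr0 ?(xmon_subset sGF) //.
  by move=> H /andP[_ /negbTE ->]; rewrite mul0r.
Qed.

End MonomialIdeal.

Lemma exists_nonface_subP (n : nat) (G : {set {set 'I_n}}) (F : {set 'I_n}) :
  is_complex G -> (exists2 H, H \in ~: G & H \subset F) <-> F \notin G.
Proof.
move=> cG; split=> [[H] | FnG]; last by exists F; rewrite ?inE.
by rewrite inE => HnG sHF; apply: contra HnG => FG; apply: cG FG sHF.
Qed.

Lemma exists_facet_subP (n d : nat) (D : {set {set 'I_n}}) (F : {set 'I_n}) :
  (forall H, H \in facets D -> #|H| = d) -> #|F| = d ->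
  (exists2 H, H \in facets D & H \subset F) <-> F \in D.
Proof.
move=> pureD cardF; split=> [[H Hf sHF] | FD].
  have -> : F = H by apply/eqP; rewrite eq_sym eqEcard sHF cardF (pureD H Hf) leqnn.
  exact: subsetP (facets_sub D) H Hf.
have [H Hf sFH] := facets_sup FD.
have -> : F = H by apply/eqP; rewrite eqEcard sFH cardF (pureD H Hf) leqnn.
by exists H.
Qed.

Theorem lemma1p1 (K : fieldType) (n d : nat) (Delta Gamma : {set {set 'I_n}}) :
  is_complex Delta -> pure_dim Delta d ->
  is_complex Gamma ->
  (forall p : {mpoly K[n]}, @facet_ideal K n Delta p <-> @SR_ideal K n Gamma p) ->
  bar_complex Delta d = skel Gamma (d%:Z - 1).
Proof.
move=> _ [_ pureD] cGamma idealE.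
rewrite /bar_complex /skel; congr gen_complex; apply/setP => F; rewrite !inE.
rewrite (inj_eq (addIr _)) eqz_nat [in RHS]andbC; case: eqP => //= cardF.
have FDeltaE : F \in Delta <-> F \notin Gamma.
  rewrite -(exists_facet_subP pureD cardF) -(exists_nonface_subP F cGamma).
  rewrite -!(in_mideal_xmonP K); exact: idealE.
by rewrite -[F \in Gamma]negbK; congr negb; apply/idP/idP => /FDeltaE.
Qed.
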